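(* Let $\varepsilon \ge 0$ and $\delta \in [0,1]$, and let $\mathcal{M}\colon\{0,1\}\to\{0,1\}$ be a randomized mechanism satisfying $(\varepsilon,\delta)$-differential privacy, i.e. for all $z\in\{0,1\}$ and all $\mathrm{x}\neq \mathrm{x}'$ in $\{0,1\}$, $$\Pr[\mathcal{M}(\mathrm{x})=z]\le e^{\varepsilon}\Pr[\mathcal{M}(\mathrm{x}')=z]+\delta.$$ Consider any classifier of the following form: it is given two probability distributions $\mathcal{S}_0,\mathcal{S}_1$ on $\mathbb{R}$, and to an individual whose reported (perturbed) value is $z\in\{0,1\}$ it assigns a score drawn from $\mathcal{S}_z$. Let $z=\mathcal{M}(1)$ be the report of a positive sample (true value $1$) and $z'=\mathcal{M}(0)$ the report of a negative sample (true value $0$), with the two runs of $\mathcal{M}$ independent, and let $s\sim\mathcal{S}_z$, $s'\sim\mathcal{S}_{z'}$ be drawn independently (given $z,z'$). Define the AUC of the classifier as $$\mathrm{AUC}=\Pr[s>s']+\tfrac12\Pr[s=s'].$$ Then $$\mathrm{AUC}\le 1-\frac{1-\delta}{e^{\varepsilon}+1}.$$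
   Context: The classifier (adversary) has access only to the reported values and to the mechanism $\mathcal{M}$, not to the true values; the AUC is the probability that a randomly chosen positive sample is ranked above a randomly chosen negative sample, with ties counted as $1/2$. *)

From HB Require Import structures.
From mathcomp Require Import all_boot all_order all_algebra.
From mathcomp Require Import all_classical all_reals all_analysis.
Set Implicit Arguments. Unset Strict Implicit. Unset Printing Implicit Defensive.
Import Order.TTheory GRing.Theory Num.Theory.
Local Open Scope classical_set_scope.
Local Open Scope ring_scope.

(* A randomized mechanism {0,1} -> {0,1} (bits encoded as bool, true = 1) is
   given by its transition probabilities: [M x z] = Pr[M(x) = z]. *)
Definition is_mechanism (R : realType) (M : bool -> bool -> R) : Prop :=
  forall x, (forall z, 0 <= M x z) /\ M x false + M x true = 1.

Definition dp (R : realType) (eps delta : R) (M : bool -> bool -> R) : Prop :=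
  forall z x x', x != x' -> M x z <= expR eps * M x' z + delta.

Definition pair_auc (R : realType) (Sa Sb : probability (measurableTypeR R) R) : R :=
  fine ((Sa \x Sb)%E [set p | p.2 < p.1])
  + 2^-1 * fine ((Sa \x Sb)%E [set p | p.1 = p.2]).

(* AUC of the classifier: z = M(1), z' = M(0) independent, s ~ S_z, s' ~ S_z'
   independent given (z, z'); by total probability over (z, z'). *)
Definition auc (R : realType) (M : bool -> bool -> R)
    (S : bool -> probability (measurableTypeR R) R) : R :=
  \sum_(z : bool) \sum_(z' : bool) M true z * M false z' * pair_auc (S z) (S z').

(* Conditioning on the two reports, AUC = 1/2 + (a - b) (q - 1/2), where
   a = Pr[M(1) = 1], b = Pr[M(0) = 1] and q is the AUC of S_1 against S_0:
   by symmetry a pair of equal reports contributes exactly 1/2, and the two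
   mixed pairs contribute q and 1 - q.  As 0 <= q <= 1, the AUC is at most
   1/2 + |a - b| / 2, and differential privacy applied at both outputs gives
   (e^eps + 1) |a - b| <= e^eps - 1 + 2 delta. *)

From HB Require Import structures.
From mathcomp Require Import all_boot all_order all_algebra.
From mathcomp Require Import all_classical all_reals all_analysis.
From mathcomp Require Import measurable_realfun ring lra.
Set Implicit Arguments. Unset Strict Implicit. Unset Printing Implicit Defensive.
Import Order.TTheory GRing.Theory Num.Theory.
Local Open Scope ring_scope.
Local Open Scope classical_set_scope.

Section comparison_events.
Context {R : realType} d {T : measurableType d}.
Implicit Types f g : T -> R.

Lemma measurable_ltr_set f g : measurable_fun setT f -> measurable_fun setT g ->
  measurable [set x | f x < g x].
Proof.
move=> mf mg; have := measurable_fun_ltr mf mg measurableT (I : measurable [set true]).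
by rewrite setTI.
Qed.

Lemma measurable_eqr_set f g : measurable_fun setT f -> measurable_fun setT g ->
  measurable [set x | f x = g x].
Proof.
move=> mf mg; have := measurable_fun_eqr mf mg measurableT (I : measurable [set true]).
by rewrite setTI; congr measurable; apply/seteqP; split=> x /= /eqP.
Qed.

Lemma probability_trichotomy (mu : probability T R) f g :
  measurable_fun setT f -> measurable_fun setT g ->
  fine (mu [set x | f x < g x]) + fine (mu [set x | g x < f x])
  + fine (mu [set x | f x = g x]) = 1.
Proof.
move=> mf mg.
have mlt := measurable_ltr_set mf mg; have mgt := measurable_ltr_set mg mf.
have meq := measurable_eqr_set mf mg.
have partition : [set x | f x < g x] `|` [set x | g x < f x] `|` [set x | f x = g x] = setT.
  apply/seteqP; split=> x // _ /=.
  by case: ltgtP => h; [left; left | left; right | right].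
have := probability_setT mu; rewrite -partition !measureU //.
- by move/(congr1 fine); rewrite !fineD ?fin_numD ?fin_num_measure.
- by apply/seteqP; split=> x // [] /lt_trans /[apply]; rewrite ltxx.
- exact: measurableU.
- by apply/seteqP; split=> x // [[]] /[swap] /= ->; rewrite ltxx.
Qed.

End comparison_events.

Lemma product_measure_swap d1 d2 (T1 : measurableType d1) (T2 : measurableType d2)
    (R : realType) (m1 : {sigma_finite_measure set T1 -> \bar R})
    (m2 : {sigma_finite_measure set T2 -> \bar R}) (A : set (T1 * T2)) :
  measurable A -> (m1 \x m2)%E A = (m2 \x m1)%E [set p | A (p.2, p.1)].
Proof.
move=> mA; have := indic_fubini_tonelli m1 m2 mA.
by rewrite indic_fubini_tonelli_FE // indic_fubini_tonelli_GE.
Qed.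

Section pair_auc.
Context {R : realType}.
Implicit Types P Q : probability (measurableTypeR R) R.

Lemma pair_auc_ge0 P Q : 0 <= pair_auc P Q.
Proof. by rewrite /pair_auc addr_ge0 ?mulr_ge0 ?fine_ge0. Qed.

Lemma pair_auc_swap P Q : pair_auc Q P = 1 - pair_auc P Q.
Proof.
have mfst := @measurable_fst _ _ R R; have msnd := @measurable_snd _ _ R R.
rewrite /pair_auc !(product_measure_swap Q P) /=; last 2 first.
- exact: measurable_eqr_set.
- exact: measurable_ltr_set.
have -> : [set p : R * R | p.2 = p.1] = [set p | p.1 = p.2].
  by apply/seteqP; split=> p /esym.
have := probability_trichotomy (P \x Q)%E mfst msnd; lra.
Qed.

Lemma pair_auc_diag P : pair_auc P P = 2^-1.
Proof. by have := pair_auc_swap P P; lra. Qed.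

Lemma pair_auc_centered P Q : `|pair_auc P Q - 2^-1| <= 2^-1.
Proof.
have := pair_auc_ge0 P Q; have := pair_auc_ge0 Q P; rewrite pair_auc_swap.
by move=> ? ?; rewrite ler_norml; apply/andP; split; lra.
Qed.

End pair_auc.

Section mechanism.
Context {R : realType} (M : bool -> bool -> R).
Hypothesis M_mechanism : is_mechanism M.

Lemma mechanism_negb x z : M x (~~ z) = 1 - M x z.
Proof. by have [_] := M_mechanism x; case: z => /=; lra. Qed.

Lemma auc_bool S : auc M S =
  2^-1 + (M true true - M false true) * (pair_auc (S true) (S false) - 2^-1).
Proof.
have M_false x : M x false = 1 - M x true by exact: mechanism_negb x true.
by rewrite /auc !big_bool /= !pair_auc_diag (pair_auc_swap (S true)) !M_false; field.
Qed.

Variables eps delta : R.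
Hypothesis M_dp : dp eps delta M.

Lemma dp_gap x x' z : x != x' ->
  (M x z - M x' z) * (expR eps + 1) <= expR eps - 1 + 2 * delta.
Proof.
move=> neq_xx'; have := M_dp z neq_xx'.
have := M_dp (~~ z) (x := x') (x' := x); rewrite eq_sym !mechanism_negb => /(_ neq_xx').
nra.
Qed.

Lemma dp_gap_norm z :
  `|M true z - M false z| <= (expR eps - 1 + 2 * delta) / (expR eps + 1).
Proof.
have e1_gt0 : 0 < expR eps + 1 by rewrite addr_gt0 ?expR_gt0.
rewrite ler_pdivlMr // -[X in _ * X]gtr0_norm // -normrM ler_norml.
have := dp_gap z (isT : true != false); have := dp_gap z (isT : false != true).
by move=> ? ?; apply/andP; split; nra.
Qed.

End mechanism.

Theorem theorem1 (R : realType) (eps delta : R)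
  (M : bool -> bool -> R) (S : bool -> probability (measurableTypeR R) R) :
  0 <= eps -> 0 <= delta -> delta <= 1 ->
  is_mechanism M -> dp eps delta M ->
  auc M S <= 1 - (1 - delta) / (expR eps + 1).
Proof.
move=> _ _ _ M_mechanism M_dp.
have gap := dp_gap_norm M_mechanism M_dp true.
have centered := pair_auc_centered (S true) (S false).
have e1_neq0 : expR eps + 1 != 0 by rewrite gt_eqF // addr_gt0 ?expR_gt0.
suff -> : 1 - (1 - delta) / (expR eps + 1) =
    2^-1 + (expR eps - 1 + 2 * delta) / (expR eps + 1) * 2^-1.
  by rewrite auc_bool // lerD2l (le_trans (ler_norm _)) // normrM ler_pM.
by field.
Qed.
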